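(* Let $\mathcal{H}$ be a finite-dimensional Hilbert space and $\tau$ an ergodic quantum channel on $\mathcal{H}$. Then every eigenvector $\Theta$ of (the linear extension of) $\tau$ to the space of linear operators on $\mathcal{H}$ whose eigenvalue has modulus one is a normal operator, i.e. $\Theta\Theta^{\dagger}=\Theta^{\dagger}\Theta$.
   Context: A quantum channel is a linear, completely positive, trace-preserving map on the space of linear operators on $\mathcal{H}$. It is ergodic if it has exactly one fixed point in the set of density matrices on $\mathcal{H}$. *)

From HB Require Import structures.
From mathcomp Require Import all_boot all_order all_algebra.
Set Implicit Arguments. Unset Strict Implicit. Unset Printing Implicit Defensive.
Import Order.TTheory GRing.Theory Num.Theory.
Local Open Scope ring_scope.

(* The Hilbert space H is C^n, with C a numeric closed field (e.g. the complex
   numbers); linear operators on H are the matrices 'M[C]_n. *)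

Definition adjmx (C : numClosedFieldType) (m p : nat) (A : 'M[C]_(m, p)) : 'M[C]_(p, m) :=
  (map_mx Num.conj A)^T.

Definition psdF (C : numClosedFieldType) (T : finType) (M : T -> T -> C) : Prop :=
  forall v : T -> C, 0 <= \sum_(i : T) \sum_(j : T) Num.conj (v i) * M i j * v j.

Definition psd (C : numClosedFieldType) (n : nat) (A : 'M[C]_n) : Prop :=
  psdF (fun i j : 'I_n => A i j).

Definition density (C : numClosedFieldType) (n : nat) (rho : 'M[C]_n) : Prop :=
  psd rho /\ \tr rho = 1.

(* complete positivity: id_k (x) f is positive for every k.  An operator on
   C^k (x) C^n is given by its blocks B i j : 'M_n (i j : 'I_k), its entries
   being indexed by 'I_k * 'I_n. *)
Definition completely_positive (C : numClosedFieldType) (n : nat)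
    (f : 'M[C]_n -> 'M[C]_n) : Prop :=
  forall (k : nat) (B : 'I_k -> 'I_k -> 'M[C]_n),
    psdF (fun p q : 'I_k * 'I_n => B p.1 q.1 p.2 q.2) ->
    psdF (fun p q : 'I_k * 'I_n => f (B p.1 q.1) p.2 q.2).

Definition trace_preserving (C : numClosedFieldType) (n : nat)
    (f : 'M[C]_n -> 'M[C]_n) : Prop :=
  forall X : 'M[C]_n, \tr (f X) = \tr X.

Definition quantum_channel (C : numClosedFieldType) (n : nat)
    (f : {linear 'M[C]_n -> 'M[C]_n}) : Prop :=
  completely_positive f /\ trace_preserving f.

Definition ergodic (C : numClosedFieldType) (n : nat)
    (f : {linear 'M[C]_n -> 'M[C]_n}) : Prop :=
  exists rho : 'M[C]_n, (density rho /\ f rho = rho) /\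
    forall sigma : 'M[C]_n, density sigma -> f sigma = sigma -> sigma = rho.

(* Let tau X = lambda X with |lambda| = 1, and let X = V P be a polar decomposition,
   P = (X^dagger X)^(1/2).  The block operator [[V P V^dagger, X], [X^dagger, P]] is
   positive, so by complete positivity so is
   [[tau (V P V^dagger), lambda X], [conj lambda X^dagger, tau P]].  Its forms at the
   vectors (V e_j, - conj lambda e_j) sum to tr (V^dagger tau(V P V^dagger) V) - tr P,
   which is <= 0 by trace preservation and V V^dagger <= 1; hence they all vanish,
   and the kernel of a positive form yields tau P = P.  By ergodicity every positive
   fixed point is a multiple of the unique fixed state rho, so X^dagger X = P^2 and
   (applying the same to the eigenvector X^dagger of conj lambda) X X^dagger are both
   multiples of rho^2; having the same trace, they are equal. *)

From mathcomp Require Import all_boot all_order all_algebra.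
From mathcomp Require Import ring.
Import Order.TTheory GRing.Theory Num.Theory.
Set Implicit Arguments. Unset Strict Implicit.
Local Open Scope ring_scope.

Lemma eq_conjC_of_real (C : numClosedFieldType) (a b : C) :
  (a + b)^* = a + b -> ('i * (a - b))^* = 'i * (a - b) -> b = a^*.
Proof.
rewrite rmorphD rmorphM /= rmorphB conjCi /= => sum_real diff_real.
have diff_conj : b^* - a^* = a - b.
  by apply: (mulfI (neq0Ci C)); rewrite -diff_real mulNr -mulrN opprB.
have : b^* *+ 2 = a *+ 2.
  have -> : b^* *+ 2 = (b^* - a^*) + (a^* + b^*) by rewrite addrA subrK mulr2n.
  by rewrite diff_conj sum_real addrCA subrK mulr2n.
by move/pmulrnI=> /(_ isT) <-; rewrite conjCK.
Qed.

Section PositiveForm.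
Variables (C : numClosedFieldType) (T : finType).
Implicit Types (M : T -> T -> C) (u v w : T -> C).

Definition sform M u w := \sum_k \sum_l (u k)^* * M k l * w l.

Definition unitv (i : T) : T -> C := fun k => (k == i)%:R.

Lemma sform_comb M a b u w :
  sform M (fun k => a * u k + b * w k) (fun k => a * u k + b * w k) =
  a^* * a * sform M u u + a^* * b * sform M u w
  + b^* * a * sform M w u + b^* * b * sform M w w.
Proof.
rewrite /sform !mulr_sumr -!big_split /=; apply: eq_bigr => k _.
rewrite !mulr_sumr -!big_split /=; apply: eq_bigr => l _.
by rewrite rmorphD !rmorphM /=; ring.
Qed.

Lemma sum_mul_eqr (F : T -> C) j : \sum_l F l * (l == j)%:R = F j.
Proof.
rewrite (bigD1 j) //= eqxx mulr1 big1 ?addr0 // => l /negbTE ->.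
by rewrite mulr0.
Qed.

Lemma sum_eq_mull (F : T -> C) j : \sum_l (l == j)%:R * F l = F j.
Proof. by under eq_bigr do rewrite mulrC; rewrite sum_mul_eqr. Qed.

Lemma sform_row M u w : sform M u w = \sum_k (u k)^* * \sum_l M k l * w l.
Proof.
by apply: eq_bigr => k _; rewrite mulr_sumr; apply: eq_bigr => l _; rewrite mulrA.
Qed.

Lemma sform_unitvl M i w : sform M (unitv i) w = \sum_l M i l * w l.
Proof.
by rewrite sform_row /unitv; under eq_bigr do rewrite rmorph_nat; rewrite sum_eq_mull.
Qed.

Lemma sform_unitvr M u j : sform M u (unitv j) = \sum_k (u k)^* * M k j.
Proof. by apply: eq_bigr => k _; rewrite sum_mul_eqr. Qed.

Lemma sform_unitv M i j : sform M (unitv i) (unitv j) = M i j.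
Proof. by rewrite sform_unitvl sum_mul_eqr. Qed.

Lemma eq_psdF M M' : (forall i j, M i j = M' i j) -> psdF M -> psdF M'.
Proof.
move=> eqM psdM v; have := psdM v; congr (_ <= _).
by apply: eq_bigr => i _; apply: eq_bigr => j _; rewrite eqM.
Qed.

Section Psd.
Variable M : T -> T -> C.
Hypothesis psdM : psdF M.

Lemma psdF_diag_ge0 i : 0 <= M i i.
Proof. by have := psdM (unitv i); rewrite -/(sform _ _ _) sform_unitv. Qed.

Lemma psdF_herm i j : M j i = (M i j)^*.
Proof.
have ei := geC0_conj (psdF_diag_ge0 i); have ej := geC0_conj (psdF_diag_ge0 j).
have real_at a : (M i i + a * M i j + a^* * M j i + a^* * a * M j j)^* =
                 M i i + a * M i j + a^* * M j i + a^* * a * M j j.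
  have := geC0_conj (psdM (fun k => 1 * unitv i k + a * unitv j k)).
  by rewrite -/(sform _ _ _) sform_comb !sform_unitv rmorph1 !mul1r !mulr1.
apply: eq_conjC_of_real.
  have := real_at 1; rewrite rmorph1 !mul1r.
  have -> : M i j + M j i = M i i + M i j + M j i + M j j - M i i - M j j by ring.
  by rewrite !rmorphB /= ei ej => ->.
have := real_at 'i; have -> : 'i^* * 'i * M j j = M j j.
  by rewrite conjCi mulNr -expr2 sqrCi opprK mul1r.
rewrite conjCi.
have -> : 'i * (M i j - M j i) = M i i + 'i * M i j + - 'i * M j i + M j j - M i i - M j j.
  by ring.
by rewrite !rmorphB /= ei ej => ->.
Qed.

Lemma psdF_ker w : sform M w w = 0 -> forall i, \sum_l M i l * w l = 0.
Proof.
move=> isotropic i; set c := \sum_l M i l * w l.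
have form_wi : sform M w (unitv i) = c^*.
  rewrite sform_unitvr /c rmorph_sum; apply: eq_bigr => k _.
  by rewrite rmorphM /= (psdF_herm i k) mulrC.
have form_iw : sform M (unitv i) w = c by rewrite sform_unitvl.
have Mii := psdF_diag_ge0 i; set s := M i i + 1.
have s_real : s^* = s by rewrite geC0_conj // addr_ge0.
(* testing against s w - c e_i gives - |c|^2 (M i i + 2) >= 0 *)
have := psdM (fun k => s * w k + (- c) * unitv i k).
rewrite -/(sform _ _ _) sform_comb isotropic form_wi form_iw sform_unitv s_real rmorphN /=.
have -> : s * s * 0 + s * - c * c^* + - c^* * s * c + - c^* * - c * M i i
   = - ((c * c^*) * (M i i + 2%:R)) by rewrite /s; ring.
rewrite oppr_ge0 pmulr_lle0 ?ltr_wpDl // => c_le0.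
by apply/eqP; rewrite -mul_conjC_eq0 eq_le c_le0 mul_conjC_ge0.
Qed.

End Psd.
End PositiveForm.

Arguments unitv {C T} i _.

Section Congruence.
Variable C : numClosedFieldType.

Lemma sform_congr (S T : finType) (M : S -> S -> C) (K : T -> S -> C) v :
  let w a := \sum_p (K p a)^* * v p in
  sform (fun p q => \sum_b (\sum_a K p a * M a b) * (K q b)^*) v v = sform M w w.
Proof.
move=> w; pose g p q a b := (v p)^* * K p a * M a b * (K q b)^* * v q.
transitivity (\sum_p \sum_q \sum_a \sum_b g p q a b).
  apply: eq_bigr => p _; apply: eq_bigr => q _.
  rewrite mulr_sumr mulr_suml exchange_big; apply: eq_bigr => b _.
  rewrite mulr_suml mulr_sumr mulr_suml; apply: eq_bigr => a _.
  by rewrite /g; ring.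
rewrite pair_bigA; under eq_bigr do rewrite pair_bigA.
rewrite exchange_big /sform [RHS]pair_bigA; apply: eq_bigr => -[a b] _ /=.
rewrite -(pair_bigA _ (fun p q => g p q a b)) /w rmorph_sum !mulr_suml.
apply: eq_bigr => p _; rewrite mulr_sumr; apply: eq_bigr => q _.
by rewrite rmorphM /= conjCK /g; ring.
Qed.

Lemma psdF_congr (S T : finType) (M : S -> S -> C) (K : T -> S -> C) :
  psdF M -> psdF (fun p q => \sum_b (\sum_a K p a * M a b) * (K q b)^*).
Proof.
move=> psdM v; have : 0 <= sform M _ _ := psdM (fun a => \sum_p (K p a)^* * v p).
by rewrite -sform_congr.
Qed.

Lemma psdF_comp (S T : finType) (M : T -> T -> C) (f : S -> T) :
  psdF M -> psdF (fun a b => M (f a) (f b)).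
Proof.
move=> /(psdF_congr (fun a t => ((f a == t)%:R : C))); apply: eq_psdF => a b.
rewrite (eq_bigr (fun t => M (f a) t * (t == f b)%:R)) ?sum_mul_eqr // => t _.
rewrite rmorph_nat eq_sym; congr (_ * _).
by under eq_bigr do rewrite eq_sym; rewrite sum_eq_mull.
Qed.

Lemma psdF_diag (T : finType) (d : T -> C) :
  (forall i, 0 <= d i) -> psdF (fun i j => d i * (i == j)%:R).
Proof.
move=> d_ge0 v; apply: sumr_ge0 => i _.
rewrite (eq_bigr (fun j => (v i)^* * d i * v j * (j == i)%:R)); last first.
  by move=> j _; rewrite eq_sym; ring.
by rewrite sum_mul_eqr mulrAC mulr_ge0 // mulrC mul_conjC_ge0.
Qed.

End Congruence.

Section Adjoint.
Variable C : numClosedFieldType.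

Lemma adjmxE m p (A : 'M[C]_(m, p)) i j : adjmx A i j = (A j i)^*.
Proof. by rewrite !mxE. Qed.

Lemma adjmxM m p q (A : 'M[C]_(m, p)) (B : 'M[C]_(p, q)) :
  adjmx (A *m B) = adjmx B *m adjmx A.
Proof. by rewrite /adjmx map_mxM trmx_mul. Qed.

Lemma adjmxK m p (A : 'M[C]_(m, p)) : adjmx (adjmx A) = A.
Proof. by apply/matrixP => i j; rewrite !adjmxE conjCK. Qed.

Lemma adjmxB m p (A B : 'M[C]_(m, p)) : adjmx (A - B) = adjmx A - adjmx B.
Proof. by apply/matrixP => i j; rewrite !mxE rmorphB. Qed.

Lemma adjmxZ m p (a : C) (A : 'M[C]_(m, p)) : adjmx (a *: A) = a^* *: adjmx A.
Proof. by apply/matrixP => i j; rewrite !mxE rmorphM. Qed.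

Lemma adjmx1 n : adjmx (1%:M : 'M[C]_n) = 1%:M.
Proof. by rewrite /adjmx map_mx1 trmx1. Qed.

Lemma adjmx_real_diag n (d : 'rV[C]_n) :
  (forall j, (d 0 j)^* = d 0 j) -> adjmx (diag_mx d) = diag_mx d.
Proof.
move=> d_real; apply/matrixP => i j; rewrite adjmxE !mxE.
by case: (eqVneq i j) => [->|_]; rewrite ?mulr1n ?d_real // !mulr0n rmorph0.
Qed.

Lemma psd_adjmx n (A : 'M[C]_n) : psd A -> adjmx A = A.
Proof. by move=> psdA; apply/matrixP => i j; rewrite adjmxE -psdF_herm. Qed.

Lemma hermitian_spectral n (H : 'M[C]_n) : adjmx H = H ->
  exists (U : 'M[C]_n) (d : 'rV[C]_n),
    [/\ U *m adjmx U = 1%:M, adjmx U *m U = 1%:M & H = adjmx U *m diag_mx d *m U].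
Proof.
have sesquiE m p (A : 'M[C]_(m, p)) : (A ^t* )%sesqui = adjmx A by rewrite /adjmx map_trmx.
move=> hermH; exists (spectralmx H), (spectral_diag H).
have UUa : spectralmx H *m adjmx (spectralmx H) = 1%:M.
  by rewrite -sesquiE; apply/unitarymxP/spectral_unitarymx.
split=> //; first exact: mulmx1C.
rewrite -sesquiE -invmx_unitary ?spectral_unitarymx //.
by apply/orthomx_spectralP/normalmxP; rewrite sesquiE hermH.
Qed.

End Adjoint.

Section Polar.
Variables (C : numClosedFieldType) (n : nat).

Local Notation dg f := (diag_mx (\row_j f j) : 'M[C]_n).

Lemma diag_rowM (f g : 'I_n -> C) : dg f *m dg g = dg (fun j => f j * g j).
Proof. by rewrite mulmx_diag; congr diag_mx; apply/rowP => j; rewrite !mxE. Qed.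

Lemma eq_diag_row (f g : 'I_n -> C) : (forall j, f j = g j) -> dg f = dg g.
Proof. by move=> fg; congr diag_mx; apply/rowP => j; rewrite !mxE. Qed.

Lemma gram_spectral (X : 'M[C]_n) : exists (U Y : 'M[C]_n) (d : 'I_n -> C),
  [/\ U *m adjmx U = 1%:M, X = Y *m U, adjmx Y *m Y = dg d,
      forall j, 0 <= d j & forall j k, d j = 0 -> Y k j = 0].
Proof.
have hermG : adjmx (adjmx X *m X) = adjmx X *m X by rewrite adjmxM adjmxK.
have [U [d0 [UUa UaU gramE]]] := hermitian_spectral hermG.
pose d j := d0 0 j; have d0E : diag_mx d0 = dg d.
  by congr diag_mx; apply/rowP => j; rewrite mxE.
pose Y := X *m adjmx U; exists U, Y, d.
have gramY : adjmx Y *m Y = dg d.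
  rewrite adjmxM adjmxK !mulmxA -(mulmxA U) gramE d0E !mulmxA UUa mul1mx.
  by rewrite -mulmxA UUa mulmx1.
have d_sum j : d j = \sum_k (Y k j)^* * Y k j.
  have := congr1 (fun A : 'M[C]_n => A j j) gramY; rewrite /= !mxE eqxx mulr1n => <-.
  by apply: eq_bigr => k _; rewrite adjmxE.
have sqnorm_ge0 k j : 0 <= (Y k j)^* * Y k j by rewrite mulrC mul_conjC_ge0.
split=> // [|j|j k]; first by rewrite -mulmxA UaU mulmx1.
  by rewrite d_sum sumr_ge0.
rewrite d_sum => /(psumr_eq0P (fun k _ => sqnorm_ge0 k j)) /(_ k isT) /eqP.
by rewrite mulrC mul_conjC_eq0 => /eqP.
Qed.

Lemma polar_decomposition (X : 'M[C]_n) : exists P V : 'M[C]_n,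
  [/\ psd P, P *m P = adjmx X *m X, V *m P = X, adjmx V *m X = P &
      (V *m adjmx V) *m (V *m adjmx V) = V *m adjmx V].
Proof.
have [U [Y [d [UUa -> gramY d_ge0 Y_col0]]]] := gram_spectral X.
(* t is the pseudo-inverse of s = sqrt d, relying on 0^-1 = 0 *)
pose s j := sqrtC (d j); pose t j := (s j)^-1; pose t2 j := t j * t j.
have s_ge0 j : 0 <= s j by rewrite sqrtC_ge0.
have ss j : s j * s j = d j by rewrite -expr2 sqrtCK.
have s0 j : s j = 0 -> d j = 0 by rewrite -ss => ->; rewrite mulr0.
have td j : t j * d j = s j.
  by rewrite /t; have [/[dup]/s0 -> ->|s_neq0] := eqVneq (s j) 0; rewrite ?mulr0 // -ss mulKf.
have t2dt2 j : t2 j * (d j * t2 j) = t2 j.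
  by rewrite /t2 /t; have [->|s_neq0] := eqVneq (s j) 0; rewrite ?invr0 ?mul0r // -ss; field.
have Yts k j : Y k j * (t j * s j) = Y k j.
  by rewrite /t; have [/s0/(Y_col0 _ k) ->|s_neq0] := eqVneq (s j) 0; rewrite ?mul0r // mulVf ?mulr1.
have real_diag (f : 'I_n -> C) : (forall j, 0 <= f j) -> adjmx (dg f) = dg f.
  by move=> f_ge0; apply: adjmx_real_diag => j; rewrite mxE geC0_conj.
have t_ge0 j : 0 <= t j by rewrite invr_ge0.
have gramE : adjmx (Y *m U) *m (Y *m U) = adjmx U *m dg d *m U.
  by rewrite adjmxM !mulmxA -(mulmxA _ (adjmx Y) Y) gramY.
exists (adjmx U *m dg s *m U), (Y *m dg t *m U); split.
- apply: eq_psdF (psdF_congr (fun p a => adjmx U p a) (psdF_diag s_ge0)) => i j.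
  rewrite !mxE; apply: eq_bigr => b _; rewrite !mxE conjCK; congr (_ * _).
  by apply: eq_bigr => a _; rewrite !mxE mulr_natr.
- rewrite gramE !mulmxA -(mulmxA _ U) UUa mulmx1.
  by rewrite -(mulmxA _ (dg s) (dg s)) diag_rowM (eq_diag_row ss).
- rewrite !mulmxA -(mulmxA _ U) UUa mulmx1 -(mulmxA _ (dg _) (dg _)) diag_rowM.
  congr (_ *m _); apply/matrixP => k j; by rewrite mul_mx_diag mxE [X in _ * X]mxE Yts.
- rewrite !adjmxM real_diag // !mulmxA -(mulmxA _ (adjmx Y) Y) gramY.
  by rewrite -(mulmxA _ (dg _) (dg _)) diag_rowM (eq_diag_row td).
- have VVa : Y *m dg t *m U *m adjmx (Y *m dg t *m U) = Y *m dg t2 *m adjmx Y.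
    rewrite !adjmxM real_diag // !mulmxA -(mulmxA _ U) UUa mulmx1.
    by rewrite -(mulmxA _ (dg _) (dg _)) diag_rowM.
  rewrite VVa !mulmxA -(mulmxA _ (adjmx Y) Y) gramY.
  rewrite -(mulmxA _ (dg _) (dg _)) diag_rowM.
  by rewrite -(mulmxA Y) diag_rowM (eq_diag_row t2dt2).
Qed.

End Polar.

Section Trace.
Variables (C : numClosedFieldType) (n : nat).
Implicit Types A P V W Z : 'M[C]_n.

Lemma mxtrace_mul_adjmx_eq0 A : \tr (A *m adjmx A) = 0 -> A = 0.
Proof.
have sqnorm_ge0 i j : 0 <= A i j * (A i j)^* by exact: mul_conjC_ge0.
move=> tr0; apply/matrixP => i j; rewrite mxE; apply/eqP; rewrite -mul_conjC_eq0.
have total : \sum_k \sum_l A k l * (A k l)^* = 0.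
  rewrite -[RHS]tr0; apply: eq_bigr => k _; rewrite mxE.
  by apply: eq_bigr => l _; rewrite adjmxE.
have row0 := psumr_eq0P (fun k _ => sumr_ge0 _ (fun l _ => sqnorm_ge0 k l)) total.
by rewrite (psumr_eq0P (fun l _ => sqnorm_ge0 i l) (row0 i isT)).
Qed.

Lemma mxtrace_adj_geC0_conj W Z : psd Z -> 0 <= \tr (adjmx W *m Z *m W).
Proof.
move=> psdZ; apply: sumr_ge0 => j _; have := psdZ (fun k => W k j).
congr (_ <= _); rewrite mxE exchange_big /=; apply: eq_bigr => k _.
by rewrite mxE mulr_suml; apply: eq_bigr => l _; rewrite !mxE; ring.
Qed.

(* Q := V V^dagger is a projection, and tr Z - tr (Q Z) = tr ((1 - Q) Z (1 - Q)) >= 0 *)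
Lemma mxtrace_partial_isometry_le V Z :
  psd Z -> (V *m adjmx V) *m (V *m adjmx V) = V *m adjmx V ->
  \tr (adjmx V *m Z *m V) <= \tr Z.
Proof.
move=> psdZ; set Q := V *m adjmx V => QQ.
have adjQ : adjmx Q = Q by rewrite adjmxM adjmxK.
set W := 1%:M - Q; have adjW : adjmx W = W by rewrite adjmxB adjmx1 adjQ.
have WW : W *m W = W by rewrite mulmxBl mul1mx mulmxBr mulmx1 QQ subrr subr0.
have trW : \tr (adjmx W *m Z *m W) = \tr Z - \tr (adjmx V *m Z *m V).
  rewrite adjW mxtrace_mulC mulmxA WW mulmxBl mul1mx linearB /=.
  by rewrite [in RHS]mxtrace_mulC mulmxA.
by rewrite -subr_ge0 -trW mxtrace_adj_geC0_conj.
Qed.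

Lemma psd_trace_eq0 P : psd P -> \tr P = 0 -> P = 0.
Proof.
move=> psdP trP0.
have Pii i : P i i = 0 := psumr_eq0P (fun i _ => psdF_diag_ge0 psdP i) trP0 (i := i) isT.
apply/matrixP => k i; rewrite mxE.
have := psdF_ker psdP (w := unitv i) _ k.
by rewrite sform_unitv Pii /unitv sum_mul_eqr => ->.
Qed.

Lemma psdZ (a : C) P : 0 <= a -> psd P -> psd (a *: P).
Proof.
move=> a_ge0 psdP v; have := mulr_ge0 a_ge0 (psdP v); congr (_ <= _).
rewrite mulr_sumr; apply: eq_bigr => i _; rewrite mulr_sumr; apply: eq_bigr => j _.
by rewrite mxE; ring.
Qed.

End Trace.

Lemma big_pair_I2 (R : nmodType) (T : finType) (F : 'I_2 * T -> R) :
  \sum_p F p = \sum_k F (ord0, k) + \sum_k F (lift ord0 ord0, k).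
Proof.
rewrite (eq_bigr (fun p => F (p.1, p.2))); last by case.
by rewrite -(pair_bigA _ (fun i k => F (i, k))) big_ord_recl big_ord1.
Qed.

Section CompletelyPositive.
Variables (C : numClosedFieldType) (n : nat) (tau : 'M[C]_n -> 'M[C]_n).
Hypothesis cp_tau : completely_positive tau.
Variables X P V : 'M[C]_n.
Hypotheses (psdP : psd P) (VP : V *m P = X) (VaX : adjmx V *m X = P).

(* B is the block operator [[V P V^dagger, X], [X^dagger, P]] = K P K^dagger with
   K = [V; 1], and N its image under id_2 (x) tau *)
Let i1 : 'I_2 := lift ord0 ord0.
Let K (i : 'I_2) : 'M[C]_n := if i == ord0 then V else 1%:M.
Let B (i j : 'I_2) : 'M[C]_n := K i *m P *m adjmx (K j).
Let N (p q : 'I_2 * 'I_n) : C := tau (B p.1 q.1) p.2 q.2.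

Lemma polar_block_psd : psdF (fun p q : 'I_2 * 'I_n => B p.1 q.1 p.2 q.2).
Proof.
apply: eq_psdF (psdF_congr (fun p a => K p.1 p.2 a) psdP) => p q.
rewrite mxE; apply: eq_bigr => b _; rewrite mxE adjmxE.
by congr (_ * _); apply: eq_bigr => a _; rewrite mxE.
Qed.

Let psdN : psdF N := cp_tau polar_block_psd.

Let adjP : adjmx P = P. Proof. exact: psd_adjmx. Qed.
Let B01 : B ord0 i1 = X. Proof. by rewrite /B /K /= adjmx1 mulmx1. Qed.
Let B10 : B i1 ord0 = adjmx X. Proof. by rewrite /B /K /= mul1mx -VP adjmxM adjP. Qed.
Let B11 : B i1 i1 = P. Proof. by rewrite /B /K /= mul1mx adjmx1 mulmx1. Qed.

Lemma polar_cp_adjmx : tau (adjmx X) = adjmx (tau X).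
Proof.
apply/matrixP => k l; have := psdF_herm psdN (ord0, l) (i1, k).
by rewrite /N /= B10 B01 adjmxE.
Qed.

Hypothesis tp_tau : trace_preserving tau.
Hypothesis projV : (V *m adjmx V) *m (V *m adjmx V) = V *m adjmx V.
Variable lambda : C.
Hypotheses (lambda_conj : lambda * lambda^* = 1) (eigX : tau X = lambda *: X).

Let eigXa : tau (adjmx X) = lambda^* *: adjmx X.
Proof. by rewrite polar_cp_adjmx eigX adjmxZ. Qed.

Let w (j : 'I_n) (p : 'I_2 * 'I_n) : C :=
  if p.1 == ord0 then V p.2 j else - lambda^* * (p.2 == j)%:R.

Let Nw_top j k : \sum_q N (ord0, k) q * w j q = (tau (B ord0 ord0) *m V) k j - X k j.
Proof.
rewrite big_pair_I2 /N /w /= B01 eigX.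
rewrite [X in _ + X](eq_bigr (fun l => (lambda *: X) k l * - lambda^* * (l == j)%:R)).
  by rewrite sum_mul_eqr mxE mulrN mulrAC lambda_conj mul1r mxE.
by move=> l _; rewrite mulrA.
Qed.

Let Nw_bottom j k : \sum_q N (i1, k) q * w j q = lambda^* * (P k j - tau P k j).
Proof.
rewrite big_pair_I2 /N /w /= B10 B11 eigXa.
have XaV : adjmx X *m V = P by rewrite -(adjmxK V) -adjmxM VaX adjP.
rewrite [X in _ + X](eq_bigr (fun l => - lambda^* * tau P k l * (l == j)%:R)) => [|l _]; last by ring.
rewrite sum_mul_eqr mulrBr mulNr; congr (_ - _).
by rewrite -XaV mxE mulr_sumr; apply: eq_bigr => l _; rewrite mxE mulrA.
Qed.

Let form_w j : sform N (w j) (w j) =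
  (adjmx V *m tau (B ord0 ord0) *m V) j j - P j j - (P j j - tau P j j).
Proof.
rewrite sform_row big_pair_I2.
under eq_bigr => k _ do rewrite Nw_top.
under [X in _ + X]eq_bigr => k _ do rewrite Nw_bottom.
rewrite /w /=; congr (_ + _).
  rewrite -[in RHS]VaX -mulmxA !mxE -sumrB; apply: eq_bigr => k _.
  by rewrite !mxE mulrBr.
rewrite (eq_bigr (fun k => (k == j)%:R * - (P k j - tau P k j))) ?sum_eq_mull // => k _.
rewrite rmorphM rmorphN /= conjCK rmorph_nat -[RHS]mul1r -lambda_conj; ring.
Qed.

Let sum_form_w_le0 : \sum_j sform N (w j) (w j) <= 0.
Proof.
have psd_tauA : psd (tau (B ord0 ord0)) := psdF_comp (fun k => (ord0, k)) psdN.
have trA : \tr (tau (B ord0 ord0)) = \tr P.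
  by rewrite tp_tau /B /K /= mxtrace_mulC VP VaX.
rewrite (eq_bigr _ (fun j _ => form_w j)) !sumrB -/(mxtrace _) -/(mxtrace P).
rewrite -/(mxtrace (tau P)) tp_tau subrr subr0 subr_le0 -trA.
exact: mxtrace_partial_isometry_le.
Qed.

Lemma polar_cp_fixed : tau P = P.
Proof.
have form_ge0 j : 0 <= sform N (w j) (w j) by exact: psdN.
have total : \sum_j sform N (w j) (w j) = 0.
  by apply/eqP; rewrite eq_le sum_form_w_le0 sumr_ge0.
have form0 j := psumr_eq0P (fun j _ => form_ge0 j) total (i := j) isT.
apply/matrixP => k j; have := psdF_ker psdN (form0 j) (i1, k).
rewrite Nw_bottom => /eqP; rewrite mulf_eq0 subr_eq0 => /orP[/eqP lambda0|/eqP //].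
by move: lambda_conj; rewrite lambda0 mulr0 => /eqP; rewrite eq_sym oner_eq0.
Qed.

End CompletelyPositive.

Section Channel.
Variables (C : numClosedFieldType) (n : nat).

Lemma cp_adjmx (tau : 'M[C]_n -> 'M[C]_n) X :
  completely_positive tau -> tau (adjmx X) = adjmx (tau X).
Proof.
have [P [V [psdP _ VP _ _]]] := polar_decomposition X.
move=> cp_tau; exact: (polar_cp_adjmx cp_tau psdP VP).
Qed.

Lemma cp_eigen_abs_fixed (tau : 'M[C]_n -> 'M[C]_n) (lambda : C) X :
    completely_positive tau -> trace_preserving tau ->
    `|lambda| = 1 -> tau X = lambda *: X ->
  exists P, [/\ psd P, P *m P = adjmx X *m X & tau P = P].
Proof.
have [P [V [psdP PP VP VaX projV]]] := polar_decomposition X.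
move=> cp_tau tp_tau lambda1 eigX; exists P; split=> //.
have lambda_conj : lambda * lambda^* = 1 by rewrite -normCK lambda1 expr1n.
exact: (polar_cp_fixed cp_tau psdP VP VaX tp_tau projV lambda_conj eigX).
Qed.

Lemma ergodic_fixed_psd (tau : {linear 'M[C]_n -> 'M[C]_n}) rho P :
    trace_preserving tau ->
    (forall sigma, density sigma -> tau sigma = sigma -> sigma = rho) ->
  psd P -> tau P = P -> P = \tr P *: rho.
Proof.
move=> tp_tau uniq_rho psdP fixP.
have [trP0|trP_neq0] := eqVneq (\tr P) 0.
  by rewrite trP0 scale0r; apply: psd_trace_eq0.
have trP_ge0 : 0 <= \tr P by apply: sumr_ge0 => i _; exact: psdF_diag_ge0.
have <- : (\tr P)^-1 *: P = rho.
  apply: uniq_rho; last by rewrite linearZ /= fixP.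
  by split; [apply: psdZ; rewrite ?invr_ge0 | rewrite linearZ /= mulVf].
by rewrite scalerA divff // scale1r.
Qed.

End Channel.

Theorem mainTheorem14 (C : numClosedFieldType) (n : nat)
    (tau : {linear 'M[C]_n -> 'M[C]_n}) :
  quantum_channel tau -> ergodic tau ->
  forall (lambda : C) (Theta : 'M[C]_n),
    Theta != 0 -> `|lambda| = 1 -> tau Theta = lambda *: Theta ->
    Theta *m adjmx Theta = adjmx Theta *m Theta.
Proof.
move=> [cp_tau tp_tau] [rho [[[psd_rho tr_rho] _] uniq_rho]] lambda Theta _ lambda1 eigT.
have eigTa : tau (adjmx Theta) = lambda^* *: adjmx Theta.
  by rewrite cp_adjmx // eigT adjmxZ.
have [P [psdP PP fixP]] := cp_eigen_abs_fixed cp_tau tp_tau lambda1 eigT.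
have conj_lambda1 : `|lambda^*| = 1 by rewrite norm_conjC.
have [Q [psdQ QQ fixQ]] := cp_eigen_abs_fixed cp_tau tp_tau conj_lambda1 eigTa.
rewrite adjmxK in QQ.
have sq_rho A : psd A -> tau A = A -> A *m A = \tr A ^+ 2 *: (rho *m rho).
  move=> psdA fixA; have AE := ergodic_fixed_psd tp_tau uniq_rho psdA fixA.
  by rewrite {1 2}AE -scalemxAl -scalemxAr scalerA expr2.
have tr_rho2 : \tr (rho *m rho) != 0.
  apply/eqP; rewrite -{2}(psd_adjmx psd_rho) => /mxtrace_mul_adjmx_eq0 rho0.
  by move: tr_rho; rewrite rho0 mxtrace0 => /eqP; rewrite eq_sym oner_eq0.
have trPQ : \tr Q ^+ 2 = \tr P ^+ 2.
  have := mxtrace_mulC Theta (adjmx Theta).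
  rewrite -PP -QQ sq_rho // (sq_rho P) // !mxtraceZ.
  exact: (mulIf tr_rho2).
by rewrite -PP -QQ sq_rho // (sq_rho P) // trPQ.
Qed.
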